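(* There is an absolute constant $c>0$ such that for all integers $1\le k\le d$ there exists a finite transitive subset $X$ of the unit sphere in $\mathbb{R}^d$ such that for every $k$-dimensional subspace $W$ (either a real subspace of $\mathbb{R}^d$ or a complex subspace of $\mathbb{C}^d\supseteq\mathbb{R}^d$) one has \[\sup_{\mathbf{x}\in X}\|\mathrm{proj}_W\mathbf{x}\|_2\ge \frac{c}{\sqrt{\log(2d/k)}}.\]
   Context: A subset $X$ of the unit sphere of $\mathbb{R}^d$ is transitive if for every $x,x'\in X$ there is $g\in\mathsf{O}(\mathbb{R}^d)$ with $gX=X$ and $gx=x'$. $\mathrm{proj}_W$ denotes orthogonal projection onto $W$. *)

From HB Require Import structures.
From mathcomp Require Import all_boot all_order all_algebra.
From mathcomp Require Import Rstruct complex.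
From Stdlib Require Import Reals.
Set Implicit Arguments. Unset Strict Implicit. Unset Printing Implicit Defensive.
Import Order.TTheory GRing.Theory Num.Theory.
Local Open Scope ring_scope.

Notation RR := Rdefinitions.R.
Notation CC := (complex Rdefinitions.R).

Definition rnorm (d : nat) (v : 'rV[RR]_d) : RR :=
  Num.sqrt (\sum_(i < d) (v 0 i) ^+ 2).

Definition cnorm (d : nat) (v : 'rV[CC]_d) : RR :=
  Num.sqrt (\sum_(i < d) ((complex.Re (v 0 i)) ^+ 2 + (complex.Im (v 0 i)) ^+ 2)).

Definition rdot (d : nat) (u v : 'rV[RR]_d) : RR := \sum_(i < d) u 0 i * v 0 i.
Definition cdot (d : nat) (u v : 'rV[CC]_d) : CC := \sum_(i < d) u 0 i * (v 0 i)^*.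

Definition orthogonal_mx (d : nat) (g : 'M[RR]_d) : Prop := g *m g^T = 1%:M.

Definition on_unit_sphere (d : nat) (X : seq 'rV[RR]_d) : Prop :=
  forall x, x \in X -> rnorm x = 1.

Definition transitive_set (d : nat) (X : seq 'rV[RR]_d) : Prop :=
  forall x x', x \in X -> x' \in X ->
    exists g : 'M[RR]_d, orthogonal_mx g /\
      (forall y, y \in X <-> exists2 z, z \in X & y = z *m g) /\
      x *m g = x'.

(* Subspaces are represented mxalgebra-style as row spaces of square matrices.
   y is the orthogonal projection of x onto the real subspace W. *)
Definition is_rproj (d : nat) (W : 'M[RR]_d) (x y : 'rV[RR]_d) : Prop :=
  (y <= W)%MS /\ forall w : 'rV[RR]_d, (w <= W)%MS -> rdot (x - y) w = 0.

Definition is_cproj (d : nat) (W : 'M[CC]_d) (x y : 'rV[CC]_d) : Prop :=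
  (y <= W)%MS /\ forall w : 'rV[CC]_d, (w <= W)%MS -> cdot (x - y) w = 0.

Definition complexify (d : nat) (x : 'rV[RR]_d) : 'rV[CC]_d :=
  map_mx (fun r : RR => (r%:C)%C) x.

From HB Require Import structures.
From mathcomp Require Import all_boot all_order all_algebra.
From mathcomp Require Import Rstruct complex spectral fingroup perm.
From mathcomp Require Import ring lra.
Import Order.TTheory GRing.Theory Num.Theory.
Local Open Scope ring_scope.
Set Implicit Arguments. Unset Strict Implicit. Unset Printing Implicit Defensive.

(* Proof of the theorem with c = 1/32.
   For 1 <= k <= d let L = sum_(j<d) 1/max(j+1,k), so that L <= 2 log(2d/k), and let X be
   the orbit of the unit vector v_j = max(j+1,k)^(-1/2) / sqrt L under the group of
   signed permutation matrices: X is transitive and lies on the sphere by construction.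
   Let W be a k-dimensional complex subspace with orthonormal basis u_1..u_k.  The
   coordinate weights p_j = |proj_W e_j|^2 satisfy p_j <= 1 and sum_j p_j = k; ranking
   them decreasingly gives sum_j v_(sigma j) sqrt(L p_j) >= sqrt k.  Khintchine's
   inequality (constant 8, from the second and fourth moments), applied coordinatewise
   to w = sum_a eps_a u_a with |w|^2 = k, yields signs eps for which, after possibly
   replacing w by -i w, sum_j v_(sigma j) |Re w_j| >= sqrt(k/L) / 16.  Matching signs and
   order, some x in X has <x, Re w> >= sqrt(k/L) / 16, and <x, Re w> = Re <proj_W x, w>
   <= |proj_W x| sqrt k gives |proj_W x| >= 1/(16 sqrt L).  Real subspaces are treated
   through their complexification, testing against Re w, which lies in W. *)

(* Average of G over the 2^n sign sequences s in {true,false}^n (true = -1). *)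
Fixpoint Esign (n : nat) (G : seq bool -> RR) : RR :=
  if n is n'.+1 then
    (Esign n' (fun s => G (true :: s)) + Esign n' (fun s => G (false :: s))) / 2
  else G [::].

Lemma Esign_le n (G H : seq bool -> RR) :
  (forall s, size s = n -> G s <= H s) -> Esign n G <= Esign n H.
Proof.
elim: n G H => [|m IH] G H GH /=; first exact: GH.
have le_t := IH (fun s => G (true :: s)) (fun s => H (true :: s)) (fun s hs => GH (_ :: s) (congr1 S hs)).
have le_f := IH (fun s => G (false :: s)) (fun s => H (false :: s)) (fun s hs => GH (_ :: s) (congr1 S hs)).
lra.
Qed.

Lemma eq_Esign n (G H : seq bool -> RR) :
  (forall s, G s = H s) -> Esign n G = Esign n H.
Proof. by move=> GH; apply/eqP; rewrite eq_le !Esign_le // => s _; rewrite GH. Qed.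

Lemma Esign_affine n a (G H : seq bool -> RR) :
  Esign n (fun s => a * G s + H s) = a * Esign n G + Esign n H.
Proof.
elim: n G H => [|m IH] G H //=.
by rewrite (IH (fun s => G (true :: s))) (IH (fun s => G (false :: s))); field.
Qed.

Lemma Esign_cst n c : Esign n (fun _ => c) = c.
Proof. by elim: n c => [|m IH] c //=; rewrite !IH; field. Qed.

Lemma EsignD n (G H : seq bool -> RR) :
  Esign n (fun s => G s + H s) = Esign n G + Esign n H.
Proof. by rewrite -[Esign n G]mul1r -Esign_affine; apply: eq_Esign => s; rewrite mul1r. Qed.

Lemma EsignZ n a (G : seq bool -> RR) : Esign n (fun s => a * G s) = a * Esign n G.
Proof.
rewrite -[a * _]addr0 -(Esign_cst n 0) -Esign_affine.
by apply: eq_Esign => s; rewrite addr0.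
Qed.

Lemma Esign_sum n m (G : 'I_m -> seq bool -> RR) :
  Esign n (fun s => \sum_(j < m) G j s) = \sum_(j < m) Esign n (G j).
Proof.
elim: m G => [|m IH] G.
  by rewrite (@eq_Esign n _ (fun _ => 0)) ?Esign_cst ?big_ord0 // => s; rewrite big_ord0.
rewrite big_ord_recr /= -IH -EsignD; apply: eq_Esign => s; exact: big_ord_recr.
Qed.

Lemma Esign_witness n (G : seq bool -> RR) : exists s, Esign n G <= G s.
Proof.
elim: n G => [|m IH] G /=; first by exists [::].
have [s1 h1] := IH (fun s => G (true :: s)).
have [s2 h2] := IH (fun s => G (false :: s)).
have [le12|lt21] := lerP (G (true :: s1)) (G (false :: s2)).
  exists (false :: s2); lra.
exists (true :: s1); lra.
Qed.

Fixpoint rsum (s : seq bool) (r : nat -> RR) : RR :=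
  if s is b :: s' then (-1) ^+ b * r 0%N + rsum s' (fun a => r a.+1) else 0.

Lemma rsum_cons_shift n c b (r : nat -> RR) (F : RR -> RR) :
  Esign n (fun s => F (c + rsum (b :: s) r)) =
  Esign n (fun s => F ((c + (-1) ^+ b * r 0%N) + rsum s (fun a => r a.+1))).
Proof. by apply: eq_Esign => s /=; rewrite addrA. Qed.

Lemma Esign_rsum_sq n c (r : nat -> RR) :
  Esign n (fun s => (c + rsum s r) ^+ 2) = c ^+ 2 + \sum_(a < n) r a ^+ 2.
Proof.
elim: n c r => [|n IH] c r /=; first by rewrite big_ord0 !addr0.
rewrite (rsum_cons_shift _ _ true _ (fun x => x ^+ 2)).
rewrite (rsum_cons_shift _ _ false _ (fun x => x ^+ 2)) !IH big_ord_recl /=.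
by rewrite expr1 expr0; field.
Qed.

Lemma Esign_rsum_quartic n c (r : nat -> RR) (Q := \sum_(a < n) r a ^+ 2) :
  Esign n (fun s => (c + rsum s r) ^+ 4) <= c ^+ 4 + 6 * c ^+ 2 * Q + 3 * Q ^+ 2.
Proof.
rewrite {}/Q; elim: n c r => [|n IH] c r /=.
  by rewrite big_ord0 !addr0 mulr0 addr0 expr0n /= mulr0 addr0.
rewrite (rsum_cons_shift _ _ true _ (fun x => x ^+ 4)).
rewrite (rsum_cons_shift _ _ false _ (fun x => x ^+ 4)) expr1 expr0 big_ord_recl /=.
rewrite mul1r mulN1r; set x := r 0%N; set Q := \sum_(i < n) _.
pose bound y := y ^+ 4 + 6 * y ^+ 2 * Q + 3 * Q ^+ 2.
have le_p : _ <= bound (c + x) := IH (c + x) (fun a => r a.+1).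
have le_m : _ <= bound (c - x) := IH (c - x) (fun a => r a.+1).
have avgE : (bound (c + x) + bound (c - x)) / 2 =
    c ^+ 4 + 6 * c ^+ 2 * (x ^+ 2 + Q) + 3 * (x ^+ 2 + Q) ^+ 2 - 2 * x ^+ 4.
  by rewrite /bound; field.
have x4_ge0 : 0 <= x ^+ 4 by rewrite (_ : 4 = 2 * 2)%N // exprM sqr_ge0.
lra.
Qed.

(* x^2 <= t|x| + x^4/t^2: split according to |x| <= t or |x| > t. *)
Lemma sqr_le_abs_quartic (x t : RR) : 0 < t -> x ^+ 2 <= t * `|x| + x ^+ 4 / t ^+ 2.
Proof.
move=> t_gt0.
have x2E : x ^+ 2 = `|x| * `|x| by rewrite -normrM -expr2 ger0_norm ?sqr_ge0.
have x4E : x ^+ 4 = x ^+ 2 * x ^+ 2 by rewrite -exprD.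
have x4t_ge0 : 0 <= x ^+ 4 / t ^+ 2 by rewrite divr_ge0 ?sqr_ge0 // x4E mulr_ge0 ?sqr_ge0.
have tx_ge0 : 0 <= t * `|x| by rewrite mulr_ge0 // ltW.
have [x_le_t|t_lt_x] := lerP `|x| t.
  suff : x ^+ 2 <= t * `|x| by lra.
  by rewrite x2E ler_wpM2r.
suff : x ^+ 2 <= x ^+ 4 / t ^+ 2 by lra.
rewrite ler_pdivlMr ?exprn_gt0 // x4E ler_wpM2l ?sqr_ge0 // x2E expr2.
by apply: ler_pM; rewrite ?ltW.
Qed.

(* With Q = sum r_a^2 and t = 2 sqrt Q, the moments give
   Q = E x^2 <= t E|x| + E x^4 / t^2 <= 2 sqrt Q E|x| + 3Q/4. *)
Lemma khintchine n (r : nat -> RR) :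
  Num.sqrt (\sum_(a < n) r a ^+ 2) <= 8 * Esign n (fun s => `|rsum s r|).
Proof.
set Q := \sum_(a < n) _; set E := Esign n _.
have E_ge0 : 0 <= E by rewrite -(Esign_cst n 0); apply: Esign_le => s.
have [->|Q_neq0] := eqVneq Q 0; first by rewrite sqrtr0 mulr_ge0.
have Q_gt0 : 0 < Q by rewrite lt_def Q_neq0 sumr_ge0 // => a _; exact: sqr_ge0.
set q := Num.sqrt Q; have q_gt0 : 0 < q by rewrite sqrtr_gt0.
have qqE : q * q = Q by rewrite -expr2 sqr_sqrtr // ltW.
have m2 : Esign n (fun s => rsum s r ^+ 2) = Q.
  have := Esign_rsum_sq n 0 r; rewrite expr0n /= add0r -/Q => <-.
  by apply: eq_Esign => s; rewrite add0r.
have m4 : Esign n (fun s => rsum s r ^+ 4) <= 3 * Q ^+ 2.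
  have := Esign_rsum_quartic n 0 r; rewrite !expr0n /= mulr0 mul0r !add0r -/Q.
  by rewrite (@eq_Esign n _ (fun s => rsum s r ^+ 4)) // => s; rewrite add0r.
have t_gt0 : 0 < 2 * q by rewrite mulr_gt0.
have le_Q : Q <= 2 * q * E + (2 * q) ^-2 * Esign n (fun s => rsum s r ^+ 4).
  rewrite -m2 /E -!EsignZ -EsignD; apply: Esign_le => s _ /=.
  by rewrite [_ ^-2 * _]mulrC sqr_le_abs_quartic.
have quartic_term : (2 * q) ^-2 * Esign n (fun s => rsum s r ^+ 4) <= 3 / 4 * Q.
  have -> : 3 / 4 * Q = (2 * q) ^-2 * (3 * Q ^+ 2).
    by rewrite -qqE; field; rewrite gt_eqF.
  by rewrite ler_wpM2l ?invr_ge0 ?sqr_ge0.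
have : q * q <= q * (8 * E) by nra.
by rewrite ler_pM2l.
Qed.

Lemma rsumE s (r : nat -> RR) :
  rsum s r = \sum_(a < size s) (-1) ^+ nth false s a * r a.
Proof. by elim: s r => [|b s IH] r /=; rewrite ?big_ord0 // big_ord_recl IH. Qed.

Lemma khintchine_ord m (f : 'I_m -> RR) :
  Num.sqrt (\sum_(a < m) f a ^+ 2) <=
  8 * Esign m (fun s => `|\sum_(a < m) (-1) ^+ nth false s a * f a|).
Proof.
pose r a := if insub a is Some i then f i else 0.
have rE (i : 'I_m) : r i = f i by rewrite /r valK.
rewrite (eq_bigr (fun a : 'I_m => r a ^+ 2)) => [|a _]; last by rewrite rE.
apply: (le_trans (khintchine m r)); rewrite ler_pM2l //.
apply: Esign_le => s sz.
rewrite rsumE -(big_mkord xpredT (fun a => (-1) ^+ nth false s a * r a)) sz big_mkord.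
by under eq_bigr => a _ do rewrite rE.
Qed.

Section RankByWeight.
Variables (d : nat) (p : 'I_d -> RR).
Hypothesis p_ge0 : forall j, 0 <= p j.

Definition heavier (i j : 'I_d) := (p j < p i) || ((p i == p j) && (i < j)%N).

Lemma heavier_irr j : heavier j j = false.
Proof. by rewrite /heavier ltxx eqxx ltnn. Qed.

Lemma heavier_trans i j l : heavier i j -> heavier j l -> heavier i l.
Proof.
rewrite /heavier => /orP[h1|/andP[/eqP e1 h1]] /orP[h2|/andP[/eqP e2 h2]].
- by rewrite (lt_trans h2 h1).
- by rewrite -e2 h1.
- by rewrite e1 h2.
- by rewrite e1 e2 eqxx (ltn_trans h1 h2) orbT.
Qed.

Lemma heavier_total i j : i != j -> heavier i j || heavier j i.
Proof.
move=> neq_ij; rewrite /heavier.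
case: (ltgtP (p i) (p j)) => h; rewrite ?orbT //= ?h ?eqxx /=.
by case: (ltngtP i j) => // /val_inj eq_ij; rewrite eq_ij eqxx in neq_ij.
Qed.

Definition wrank (j : 'I_d) : nat := #|[set i | heavier i j]|.

Lemma wrank_lt j : (wrank j < d)%N.
Proof.
have /subset_leq_card le_card : [set i | heavier i j] \subset [set~ j].
  by apply/subsetP => i; rewrite !inE; apply: contraTneq => ->; rewrite heavier_irr.
rewrite (leq_ltn_trans le_card) // cardsC1 card_ord prednK //.
exact: leq_ltn_trans (leq0n j) (ltn_ord j).
Qed.

Lemma wrank_inj : injective (fun j => Ordinal (wrank_lt j)).
Proof.
have lt_rank i j : heavier i j -> (wrank i < wrank j)%N.
  move=> hij; apply/proper_card/properP; split.
    by apply/subsetP => l; rewrite !inE => /heavier_trans; apply.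
  by exists i; rewrite !inE ?hij ?heavier_irr.
move=> i j /(congr1 val) /= eq_rank; apply/eqP/negPn/negP => /heavier_total.
by case/orP => /lt_rank; rewrite eq_rank ltnn.
Qed.

(* The coordinate j together with the wrank j heavier ones all weigh at least p j. *)
Lemma wrank_bound j : (wrank j).+1%:R * p j <= \sum_l p l.
Proof.
have -> : (wrank j).+1%:R * p j = \sum_l (if heavier l j || (l == j) then p j else 0).
  rewrite -big_mkcond /= sumr_const mulr_natl; congr (_ *+ _).
  rewrite -(@eq_card _ (j |: [set i | heavier i j])) => [|l]; last by rewrite !inE orbC.
  by rewrite cardsU1 !inE heavier_irr.
apply: ler_sum => l _; case: ifP => [/orP[|/eqP -> //]|_ //].
by rewrite /heavier => /orP[/ltW //|/andP[/eqP -> _]].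
Qed.

Lemma rank_by_weight :
  exists sigma : {perm 'I_d}, forall j, (sigma j).+1%:R * p j <= \sum_l p l.
Proof. by exists (perm wrank_inj) => j; rewrite permE; exact: wrank_bound. Qed.

End RankByWeight.

Section SignedPermutations.
Variables (d : nat) (v : 'I_d -> RR).

Definition sperm_vec (t : {ffun 'I_d -> bool} * {perm 'I_d}) : 'rV[RR]_d :=
  \row_i ((-1) ^+ t.1 i * v (t.2 i)).

Definition sperm_orbit : seq 'rV[RR]_d :=
  [seq sperm_vec t | t <- enum {: {ffun 'I_d -> bool} * {perm 'I_d}}].

Lemma sperm_orbitP x : reflect (exists t, x = sperm_vec t) (x \in sperm_orbit).
Proof.
apply: (iffP mapP) => [[t _ ->]|[t ->]]; first by exists t.
by exists t; rewrite ?mem_enum.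
Qed.

Definition sperm_mx (eps : {ffun 'I_d -> bool}) (tau : {perm 'I_d}) : 'M[RR]_d :=
  \matrix_(i, j) (if tau i == j then (-1) ^+ eps i else 0).

Lemma sperm_mx_orthogonal eps tau : orthogonal_mx (sperm_mx eps tau).
Proof.
apply/matrixP => i j; rewrite !mxE (bigD1 (tau i)) //= !mxE eqxx big1 ?addr0; last first.
  by move=> l /negPf neq_l; rewrite !mxE eq_sym neq_l mul0r.
have [->|neq_ij] := eqVneq i j; first by rewrite eqxx -signr_addb addbb.
by rewrite (inj_eq perm_inj) eq_sym (negPf neq_ij) mulr0.
Qed.

Lemma sperm_vec_mx t eps tau :
  sperm_vec t *m sperm_mx eps tau =
  sperm_vec ([ffun j => t.1 ((tau^-1)%g j) (+) eps ((tau^-1)%g j)], ((tau^-1)%g * t.2)%g).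
Proof.
apply/rowP => j; rewrite mxE (bigD1 ((tau^-1)%g j)) //= !mxE permKV eqxx.
rewrite big1 => [|i neq_i]; last first.
  by rewrite !mxE; case: eqP => [eq_j|]; [rewrite -eq_j permK eqxx in neq_i | rewrite mulr0].
by rewrite addr0 ffunE permM signr_addb mulrAC.
Qed.

Lemma sperm_orbit_transitive : transitive_set sperm_orbit.
Proof.
move=> _ _ /sperm_orbitP[t ->] /sperm_orbitP[t' ->].
pose tau := ((t'.2 * t.2^-1)^-1)%g.
pose eps := [ffun i => t.1 i (+) t'.1 (tau i)].
exists (sperm_mx eps tau); split; first exact: sperm_mx_orthogonal.
split=> [y|]; last first.
  rewrite sperm_vec_mx; congr (sperm_vec (_, _)).
    by apply/ffunP => j; rewrite !ffunE permKV addbA addbb.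
  by rewrite invgK -mulgA mulVg mulg1.
split=> [/sperm_orbitP[u ->]|[z /sperm_orbitP[u ->] ->]]; last first.
  by rewrite sperm_vec_mx; apply/sperm_orbitP; eexists.
exists (sperm_vec ([ffun i => u.1 (tau i) (+) eps i], (tau * u.2)%g)).
  by apply/sperm_orbitP; eexists.
rewrite sperm_vec_mx; congr (sperm_vec (_, _)).
  by apply/ffunP => j; rewrite !ffunE permKV addbK.
by rewrite mulgA mulVg mul1g.
Qed.

Lemma sperm_orbit_sphere : \sum_i v i ^+ 2 = 1 -> on_unit_sphere sperm_orbit.
Proof.
move=> v_unit _ /sperm_orbitP[t ->]; rewrite /rnorm.
rewrite (eq_bigr (fun i => v (t.2 i) ^+ 2)) => [|i _]; last first.
  by rewrite mxE exprMn sqrr_sign mul1r.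
by rewrite -(@reindex_inj _ _ _ _ t.2 xpredT (fun i => v i ^+ 2) (@perm_inj _ t.2)) v_unit sqrtr1.
Qed.

Lemma sperm_orbit_align (y : 'I_d -> RR) (sigma : {perm 'I_d}) :
  exists2 x, x \in sperm_orbit & \sum_j x 0 j * y j = \sum_j v (sigma j) * `|y j|.
Proof.
exists (sperm_vec ([ffun j => y j < 0], sigma)); first by apply/sperm_orbitP; eexists.
apply: eq_bigr => j _; rewrite mxE ffunE /=.
by have [y_lt0|y_ge0] := ltrP (y j) 0; [rewrite ltr0_norm // expr1 | rewrite ger0_norm // expr0]; ring.
Qed.

End SignedPermutations.

Local Notation ln := Rpower.ln.

Lemma ln_le_subr1 (x : RR) : 0 < x -> ln x <= x - 1.
Proof.
move=> x_gt0; have := Rpower.exp_ineq1_le (ln x).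
rewrite Rpower.exp_ln; last exact/RltP.
by move/RleP; rewrite RplusE R1E => h; lra.
Qed.

Lemma lnM (x y : RR) : 0 < x -> 0 < y -> ln (x * y) = ln x + ln y.
Proof. by move=> /RltP x_gt0 /RltP y_gt0; rewrite Rpower.ln_mult. Qed.

Lemma lnV (x : RR) : 0 < x -> ln (x^-1) = - ln x.
Proof. by move=> /RltP x_gt0; rewrite -RinvE Rpower.ln_Rinv. Qed.

Lemma ler_ln (x y : RR) : 0 < x -> x <= y -> ln x <= ln y.
Proof.
move=> x_gt0; rewrite le_eqVlt => /predU1P[->//|lt_xy].
by apply/RleP/RIneq.Rlt_le/Rpower.ln_increasing; apply/RltP.
Qed.

Lemma ln2_gt_half : 2^-1 < ln 2 :> RR.
Proof. by have := Rpower.ln_lt_2; rewrite IZRposE INRE RinvE => /RltP. Qed.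

Definition harm_trunc (k d : nat) : RR := \sum_(j < d) ((maxn j.+1 k)%:R)^-1.

Lemma inv_le_ln_diff (n : nat) : (0 < n)%N -> ((n.+1)%:R : RR)^-1 <= ln n.+1%:R - ln n%:R.
Proof.
move=> n_gt0.
have n_gt0R : 0 < (n%:R : RR) by rewrite ltr0n.
have n1_gt0R : 0 < (n.+1%:R : RR) by rewrite ltr0n.
have := ln_le_subr1 (divr_gt0 n_gt0R n1_gt0R).
rewrite lnM ?invr_gt0 // lnV // (_ : n%:R / n.+1%:R - 1 = - (n.+1%:R)^-1 :> RR).
  by rewrite lerNr opprB.
by rewrite -natr1; field; rewrite natr1 gt_eqF.
Qed.

Lemma harm_trunc_le k m : (0 < k)%N -> harm_trunc k (k + m) <= 1 + ln (k + m)%:R - ln k%:R.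
Proof.
move=> k_gt0; elim: m => [|m IH].
  rewrite addn0 addrK /harm_trunc (eq_bigr (fun _ => (k%:R : RR)^-1)) => [|j _].
    by rewrite sumr_const card_ord -[_^-1 *+ k]mulr_natr mulVf // pnatr_eq0 -lt0n.
  by rewrite (maxn_idPr _) // ltn_ord.
rewrite /harm_trunc addnS big_ord_recr /= -/(harm_trunc k (k + m)).
rewrite (maxn_idPl (leqW (leq_addr m k))).
have := inv_le_ln_diff (ltn_addr m k_gt0); set u := (_^-1 : RR); lra.
Qed.

Lemma harm_trunc_log k d : (0 < k)%N -> (k <= d)%N ->
  harm_trunc k d <= 2 * ln ((2 * d)%:R / k%:R).
Proof.
move=> k_gt0 le_kd; rewrite -(subnKC le_kd).
have := harm_trunc_le (d - k) k_gt0; set D := (k + (d - k))%N.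
have k_gt0R : 0 < (k%:R : RR) by rewrite ltr0n.
have D_gt0R : 0 < (D%:R : RR) by rewrite ltr0n /D ltn_addr.
have ln_kD : ln k%:R <= ln D%:R by rewrite ler_ln // ler_nat leq_addr.
rewrite natrM lnM ?mulr_gt0 ?invr_gt0 // lnM // lnV //.
by have := ln2_gt_half; lra.
Qed.

Lemma harm_trunc_gt0 k d : (0 < k)%N -> (k <= d)%N -> 0 < harm_trunc k d.
Proof.
move=> k_gt0 le_kd; have d_gt0 : (0 < d)%N := leq_trans k_gt0 le_kd.
rewrite /harm_trunc (bigD1 (Ordinal d_gt0)) //= ltr_pwDl //.
  by rewrite invr_gt0 ltr0n leq_max.
by apply: sumr_ge0 => j _; rewrite invr_ge0.
Qed.

(* Cauchy-Schwarz for real families, via Lagrange's identity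
   2 (P Q - S^2) = sum_(i,j) (a_i c_j - a_j c_i)^2. *)
Lemma cauchy_schwarz (I : finType) (a c : I -> RR) :
  \sum_i a i * c i <= Num.sqrt (\sum_i a i ^+ 2) * Num.sqrt (\sum_i c i ^+ 2).
Proof.
set S := \sum_i _; set P := \sum_i a i ^+ 2; set Q := \sum_i c i ^+ 2.
have P_ge0 : 0 <= P by apply: sumr_ge0 => i _; exact: sqr_ge0.
have lagrange : 2 * (P * Q - S ^+ 2) = \sum_i \sum_j (a i * c j - a j * c i) ^+ 2.
  rewrite (_ : 2 * _ = P * Q + Q * P - 2 * (S * S)); last by ring.
  rewrite /P /Q /S !big_distrlr mulr_sumr -big_split -sumrB /=; apply: eq_bigr => i _.
  by rewrite mulr_sumr -big_split -sumrB /=; apply: eq_bigr => j _; ring.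
have Q_ge0 : 0 <= Q by apply: sumr_ge0 => i _; exact: sqr_ge0.
have S2_le : S ^+ 2 <= P * Q.
  rewrite -subr_ge0 -(pmulr_rge0 _ (_ : 0 < 2)) // lagrange.
  by do 2!apply: sumr_ge0 => ? _; exact: sqr_ge0.
rewrite -sqrtrM // (le_trans (ler_norm S)) // -sqrtr_sqr ler_sqrt ?mulr_ge0 //.
Qed.

(* Cauchy-Schwarz for pairs of families, i.e. for R^2n seen as n-tuples of pairs;
   this is the real inner product of C^n. *)
Lemma cauchy_schwarz2 n (a b c e : 'I_n -> RR) :
  \sum_j (a j * c j + b j * e j) <=
  Num.sqrt (\sum_j (a j ^+ 2 + b j ^+ 2)) * Num.sqrt (\sum_j (c j ^+ 2 + e j ^+ 2)).
Proof.
pose glue (u v : 'I_n -> RR) (x : bool) j := if x then u j else v j.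
have := cauchy_schwarz (fun p => glue a b p.1 p.2) (fun p => glue c e p.1 p.2).
rewrite -(pair_bigA _ (fun x j => glue a b x j * glue c e x j)).
rewrite -(pair_bigA _ (fun x j => glue a b x j ^+ 2)) -(pair_bigA _ (fun x j => glue c e x j ^+ 2)).
by rewrite !big_bool -!big_split.
Qed.

Lemma sqrtrD_le (A B : RR) : 0 <= A -> 0 <= B ->
  Num.sqrt (A + B) <= Num.sqrt A + Num.sqrt B.
Proof.
move=> A_ge0 B_ge0; have sA := sqrtr_ge0 A; have sB := sqrtr_ge0 B.
rewrite -(ger0_norm (addr_ge0 sA sB)) -sqrtr_sqr ler_sqrt ?sqr_ge0 //.
rewrite sqrrD !sqr_sqrtr //.
have : 0 <= Num.sqrt A * Num.sqrt B *+ 2 by rewrite mulrn_wge0 // mulr_ge0.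
lra.
Qed.

Local Notation Re := complex.Re.
Local Notation Im := complex.Im.
Local Open Scope sesquilinear_scope.

Lemma mul_conjC (z : CC) : z * z^* = ((Re z) ^+ 2 + (Im z) ^+ 2)%:C%C.
Proof.
by case: z => a b; apply/eqP; rewrite eq_complex /=; apply/andP; split; apply/eqP; ring.
Qed.

Lemma Re_realM (r : RR) (z : CC) : Re (r%:C%C * z) = r * Re z.
Proof. by case: z => a b /=; ring. Qed.

Lemma Im_realM (r : RR) (z : CC) : Im (r%:C%C * z) = r * Im z.
Proof. by case: z => a b /=; ring. Qed.

Definition cnorm2 n (y : 'rV[CC]_n) : RR := \sum_i (Re (y 0 i) ^+ 2 + Im (y 0 i) ^+ 2).

Lemma cnorm2_ge0 n (y : 'rV[CC]_n) : 0 <= cnorm2 y.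
Proof. by apply: sumr_ge0 => i _; rewrite addr_ge0 ?sqr_ge0. Qed.

Lemma cnorm2_mx n (y : 'rV[CC]_n) : (y *m y ^t*) 0 0 = (cnorm2 y)%:C%C.
Proof. by rewrite mxE rmorph_sum; apply: eq_bigr => i _; rewrite !mxE mul_conjC. Qed.

Section OrthonormalRows.
Variables (m d : nat) (U : 'M[CC]_(m, d)).
Hypothesis U_unitary : U *m U ^t* = 1%:M.

Lemma cnorm2_mulU (q : 'rV[CC]_m) : cnorm2 (q *m U) = cnorm2 q.
Proof.
apply: (@complexI RR); rewrite -!cnorm2_mx trmx_mul map_mxM.
by rewrite mulmxA -(mulmxA q) U_unitary mulmx1.
Qed.

(* The weight of coordinate j in the span W of U: |proj_W e_j|^2. *)
Definition colw (j : 'I_d) : RR := \sum_(a < m) (Re (U a j) ^+ 2 + Im (U a j) ^+ 2).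

Lemma colw_ge0 j : 0 <= colw j.
Proof. by apply: sumr_ge0 => a _; rewrite addr_ge0 ?sqr_ge0. Qed.

Lemma colw_sum : \sum_j colw j = m%:R.
Proof.
rewrite /colw exchange_big /= -[m in RHS]card_ord -sumr_const; apply: eq_bigr => a _.
have := cnorm2_mulU (delta_mx 0 a); rewrite -rowE => rowE.
transitivity (cnorm2 (row a U)); first by apply: eq_bigr => j _; rewrite mxE.
rewrite rowE /cnorm2 (bigD1 a) //= big1 => [|i /negPf neq_ia]; last first.
  by rewrite mxE neq_ia /= expr0n /= addr0.
by rewrite mxE !eqxx /= expr1n expr0n /= !addr0.
Qed.

(* ... and each is at most 1, testing against the row vector conj(U_(.,j)). *)
Lemma colw_le1 j : colw j <= 1.
Proof.
pose q : 'rV[CC]_m := \row_a (U a j)^*.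
have qUj : (q *m U) 0 j = (colw j)%:C%C.
  by rewrite mxE rmorph_sum; apply: eq_bigr => a _; rewrite mxE mulrC mul_conjC.
have : Re ((q *m U) 0 j) ^+ 2 <= cnorm2 (q *m U).
  rewrite /cnorm2 (bigD1 j) //= -addrA lerDl addr_ge0 ?sqr_ge0 //.
  by apply: sumr_ge0 => i _; rewrite addr_ge0 ?sqr_ge0.
rewrite qUj cnorm2_mulU /= (_ : cnorm2 q = colw j); last first.
  by apply: eq_bigr => a _; rewrite mxE; case: (U a j) => x y /=; ring.
have [->//|colw_neq0] := eqVneq (colw j) 0.
have colw_gt0 : 0 < colw j by rewrite lt_def colw_neq0 colw_ge0.
by rewrite expr2 -[X in _ <= X -> _]mulr1 ler_pM2l.
Qed.

Definition scomb (s : seq bool) : 'rV[CC]_d :=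
  (\row_(a < m) ((-1) ^+ nth false s a)%:C%C) *m U.

Lemma scomb_sub s : (scomb s <= U)%MS.
Proof. exact: submxMl. Qed.

Lemma cnorm2_scomb s : cnorm2 (scomb s) = m%:R.
Proof.
rewrite cnorm2_mulU /cnorm2 -[m in RHS]card_ord -sumr_const; apply: eq_bigr => a _.
by rewrite mxE /= sqrr_sign expr0n /= addr0.
Qed.

Lemma Re_scomb s j : Re (scomb s 0 j) = \sum_(a < m) (-1) ^+ nth false s a * Re (U a j).
Proof. by rewrite mxE raddf_sum; apply: eq_bigr => a _; rewrite mxE; exact: Re_realM. Qed.

Lemma Im_scomb s j : Im (scomb s 0 j) = \sum_(a < m) (-1) ^+ nth false s a * Im (U a j).
Proof. by rewrite mxE raddf_sum; apply: eq_bigr => a _; rewrite mxE; exact: Im_realM. Qed.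

Lemma scomb_khintchine j :
  Num.sqrt (colw j) <=
  8 * (Esign m (fun s => `|Re (scomb s 0 j)|) + Esign m (fun s => `|Im (scomb s 0 j)|)).
Proof.
have sqrt_split : Num.sqrt (colw j) <=
    Num.sqrt (\sum_a Re (U a j) ^+ 2) + Num.sqrt (\sum_a Im (U a j) ^+ 2).
  by rewrite /colw big_split sqrtrD_le // sumr_ge0 // => a _; exact: sqr_ge0.
have := khintchine_ord (fun a => Re (U a j)); have := khintchine_ord (fun a => Im (U a j)).
rewrite (eq_Esign _ (fun s => congr1 _ (Re_scomb s j))).
rewrite (eq_Esign _ (fun s => congr1 _ (Im_scomb s j))).
lra.
Qed.

Lemma scomb_large (c : 'I_d -> RR) : (forall j, 0 <= c j) ->
  Num.sqrt m%:R <= \sum_j c j * Num.sqrt (colw j) ->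
  exists s, Num.sqrt m%:R <= 8 * \sum_j c j * (`|Re (scomb s 0 j)| + `|Im (scomb s 0 j)|).
Proof.
move=> c_ge0 le_m; have [s le_s] := Esign_witness m
  (fun s => \sum_j c j * (`|Re (scomb s 0 j)| + `|Im (scomb s 0 j)|)).
exists s; apply: (le_trans le_m); apply: (le_trans _ (ler_wpM2l _ le_s)) => //.
rewrite Esign_sum mulr_sumr; apply: ler_sum => j _.
rewrite (eq_Esign _ (fun s => mulrDr _ _ _)) EsignD !EsignZ -mulrDr mulrCA.
by rewrite ler_wpM2l // scomb_khintchine.
Qed.

End OrthonormalRows.

Lemma share_le (p : RR) (t k : nat) : (0 < k)%N -> 0 <= p -> p <= 1 ->
  t.+1%:R * p <= k%:R ->
  p <= Num.sqrt k%:R * ((Num.sqrt (maxn t.+1 k)%:R)^-1 * Num.sqrt p).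
Proof.
move=> k_gt0 p_ge0 p_le1 le_tp; set M := maxn t.+1 k.
have M_gt0 : 0 < (M%:R : RR) by rewrite ltr0n leq_max k_gt0 orbT.
have pM_le : p * M%:R <= k%:R.
  rewrite /M; have [le_tk|lt_kt] := leqP t.+1 k; last by rewrite mulrC.
  by rewrite -[X in _ <= X]mul1r ler_wpM2r.
rewrite mulrCA mulrC ler_pdivlMr ?sqrtr_gt0 //.
have -> : p * Num.sqrt M%:R = Num.sqrt (p ^+ 2 * M%:R).
  by rewrite sqrtrM ?sqr_ge0 // sqrtr_sqr ger0_norm.
rewrite -sqrtrM ?ler0n //.
by rewrite ler_sqrt ?mulr_ge0 ?ler0n // expr2 -mulrA [k%:R * p]mulrC ler_wpM2l.
Qed.

Lemma sum_sqrt_lower n (p c : 'I_n -> RR) (k : nat) : (0 < k)%N ->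
  \sum_j p j = k%:R -> (forall j, p j <= Num.sqrt k%:R * (c j * Num.sqrt (p j))) ->
  Num.sqrt k%:R <= \sum_j c j * Num.sqrt (p j).
Proof.
move=> k_gt0 p_sum le_p; have sk_gt0 : 0 < Num.sqrt (k%:R : RR) by rewrite sqrtr_gt0 ltr0n.
rewrite -(ler_pM2l sk_gt0) -expr2 sqr_sqrtr // -{1}p_sum mulr_sumr.
by apply: ler_sum => j _; exact: le_p.
Qed.

Lemma inv_sqrt_bound (L l : RR) : 0 < L -> L <= 2 * l ->
  32^-1 / Num.sqrt l <= (16 * Num.sqrt L)^-1.
Proof.
move=> L_gt0 le_L; have l_gt0 : 0 < l by lra.
have sqrt4E : Num.sqrt (4 * l) = 2 * Num.sqrt l.
  by rewrite sqrtrM // (_ : 4 = 2 ^+ 2) ?sqrtr_sqr ?ger0_norm // expr2 -natrM.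
have : Num.sqrt L <= 2 * Num.sqrt l by rewrite -sqrt4E ler_sqrt; lra.
have sL_gt0 : 0 < Num.sqrt L by rewrite sqrtr_gt0.
have sl_gt0 : 0 < Num.sqrt l by rewrite sqrtr_gt0.
rewrite -invfM lef_pV2 ?posrE ?mulr_gt0 //; lra.
Qed.

(* Orthogonal projections do not decrease pairings with vectors of the subspace:
   <x, w> = <proj x, w> <= |proj x| |w|. *)
Lemma rproj_pairing d (W : 'M[RR]_d) x y w : is_rproj W x y -> (w <= W)%MS ->
  rdot x w <= rnorm y * rnorm w.
Proof.
move=> [_ orth_y] wW; have := orth_y w wW; rewrite /rdot.
under eq_bigr => i _ do rewrite !mxE mulrBl.
rewrite sumrB => /eqP; rewrite subr_eq0 => /eqP ->; exact: cauchy_schwarz.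
Qed.

Lemma cproj_pairing d (W : 'M[CC]_d) x y w : is_cproj W (complexify x) y -> (w <= W)%MS ->
  \sum_j x 0 j * Re (w 0 j) <= cnorm y * cnorm w.
Proof.
move=> [_ orth_y] wW; have := congr1 (@complex.Re RR) (orth_y w wW); rewrite /cdot raddf_sum /=.
under eq_bigr => i _ do rewrite !mxE mulrBl raddfB /= Re_realM.
rewrite sumrB => /eqP; rewrite subr_eq0 => /eqP xwE.
rewrite (eq_bigr (fun j => x 0 j * Re (w 0 j)^*)) ?xwE => [|j _]; last by case: (w 0 j).
rewrite (eq_bigr (fun j => Re (y 0 j) * Re (w 0 j) + Im (y 0 j) * Im (w 0 j))) => [|j _].
  exact: cauchy_schwarz2.
by case: (y 0 j) => a b; case: (w 0 j) => e f /=; ring.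
Qed.

Lemma Re_row_sub d (W : 'M[RR]_d) (w : 'rV[CC]_d) :
  (w <= map_mx (real_complex RR) W)%MS -> (\row_j Re (w 0 j) <= W)%MS.
Proof.
case/submxP => D ->; apply/submxP; exists (map_mx (@complex.Re RR) D).
apply/rowP => j; rewrite !mxE raddf_sum; apply: eq_bigr => a _.
by rewrite !mxE; case: (D 0 a) => u v /=; ring.
Qed.

Lemma rnorm_Re_le d (w : 'rV[CC]_d) : rnorm (\row_j Re (w 0 j)) <= cnorm w.
Proof.
rewrite ler_sqrt ?cnorm2_ge0 //; apply: ler_sum => j _.
by rewrite mxE lerDl sqr_ge0.
Qed.

Lemma schmidt_unitary d (W : 'M[CC]_d) :
  schmidt (row_base W) *m (schmidt (row_base W)) ^t* = 1%:M.
Proof. by apply/unitarymxP/schmidt_unitarymx; rewrite rank_leq_col. Qed.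

Lemma schmidt_row_base_sub d (W : 'M[CC]_d) : (schmidt (row_base W) <= W)%MS.
Proof. by rewrite (eqmx_schmidt_free (row_base_free W)) eq_row_base. Qed.

Lemma le_from_pairing (s beta N M : RR) : 0 < s -> 0 <= N -> M <= s ->
  s * beta <= N * M -> beta <= N.
Proof.
move=> s_gt0 N_ge0 le_Ms le_pair; rewrite -(ler_pM2l s_gt0) [s * N]mulrC.
exact: le_trans le_pair (ler_wpM2l N_ge0 le_Ms).
Qed.

Section Configuration.
Variables (k d : nat).
Hypotheses (k_gt0 : (0 < k)%N) (le_kd : (k <= d)%N).

Definition cweight (j : 'I_d) : RR := (Num.sqrt (maxn j.+1 k)%:R)^-1.

Definition config_vec (j : 'I_d) : RR := cweight j / Num.sqrt (harm_trunc k d).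

Lemma config_vec_unit : \sum_j config_vec j ^+ 2 = 1.
Proof.
have L_gt0 := harm_trunc_gt0 k_gt0 le_kd.
rewrite (eq_bigr (fun j : 'I_d => ((maxn j.+1 k)%:R)^-1 / harm_trunc k d)) => [|j _].
  by rewrite -mulr_suml mulfV // gt_eqF.
by rewrite exprMn !exprVn !sqr_sqrtr // ltW.
Qed.

Definition config_bound : RR := (16 * Num.sqrt (harm_trunc k d))^-1.

Lemma config_align (y : 'I_d -> RR) (sigma : {perm 'I_d}) :
  Num.sqrt k%:R <= 16 * \sum_j cweight (sigma j) * `|y j| ->
  exists2 x, x \in sperm_orbit config_vec &
    Num.sqrt k%:R * config_bound <= \sum_j x 0 j * y j.
Proof.
move=> le_y; have [x xX xyE] := sperm_orbit_align config_vec y sigma.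
exists x => //; rewrite xyE /config_vec /config_bound invfM mulrA.
under eq_bigr => j _ do rewrite mulrAC.
rewrite -mulr_suml ler_pM2r ?invr_gt0 ?sqrtr_gt0 ?harm_trunc_gt0 //.
by rewrite ler_pdivrMr // mulrC.
Qed.

Lemma config_test_vector m (U : 'M[CC]_(m, d)) : m = k -> U *m U ^t* = 1%:M ->
  exists w : 'rV[CC]_d, [/\ (w <= U)%MS, cnorm2 w = k%:R &
    exists2 x, x \in sperm_orbit config_vec &
      Num.sqrt k%:R * config_bound <= \sum_j x 0 j * Re (w 0 j)].
Proof.
move=> mk U_unitary; subst m.
have [sigma le_sigma] := rank_by_weight (colw_ge0 U).
rewrite colw_sum // in le_sigma.
have [s le_s] : exists s, Num.sqrt k%:R <=
    8 * \sum_j cweight (sigma j) * (`|Re (scomb U s 0 j)| + `|Im (scomb U s 0 j)|).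
  apply: scomb_large => [j|]; first by rewrite invr_ge0 sqrtr_ge0.
  apply: sum_sqrt_lower (colw_sum U_unitary) _ => // j.
  exact: share_le (colw_ge0 U j) (colw_le1 U_unitary j) (le_sigma j).
rewrite (eq_bigr (fun j => cweight (sigma j) * `|Re (scomb U s 0 j)|
  + cweight (sigma j) * `|Im (scomb U s 0 j)|)) ?big_split /= in le_s => [|j _]; last first.
  by rewrite mulrDr.
have [le_Re|lt_Re] := lerP (Num.sqrt k%:R) (16 * \sum_j cweight (sigma j) * `|Re (scomb U s 0 j)|).
  exists (scomb U s); split; [exact: scomb_sub | exact: cnorm2_scomb |].
  exact: config_align le_Re.
exists ((- 'i%C) *: scomb U s); split.
- exact: scalemx_sub (scomb_sub _ _).
- rewrite -(cnorm2_scomb U_unitary s); apply: eq_bigr => j _; rewrite mxE.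
  by case: (scomb U s 0 j) => a b /=; ring.
have [|x xX le_x] := @config_align (fun j => Im (scomb U s 0 j)) sigma; first lra.
exists x => //; rewrite (eq_bigr (fun j => x 0 j * Im (scomb U s 0 j))) // => j _.
by rewrite mxE; case: (scomb U s 0 j) => a b /=; ring.
Qed.

Lemma cnorm_test_vector (w : 'rV[CC]_d) : cnorm2 w = k%:R -> cnorm w = Num.sqrt k%:R.
Proof. by rewrite /cnorm => <-. Qed.

Lemma config_cproj (W : 'M[CC]_d) : \rank W = k ->
  exists2 x, x \in sperm_orbit config_vec &
    forall y, is_cproj W (complexify x) y -> config_bound <= cnorm y.
Proof.
move=> rW; have [w [wU /cnorm_test_vector w_norm [x xX le_x]]] :=
  config_test_vector rW (schmidt_unitary W).
have sk_gt0 : 0 < Num.sqrt (k%:R : RR) by rewrite sqrtr_gt0 ltr0n.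
exists x => // y yP; apply: (le_from_pairing sk_gt0 (sqrtr_ge0 _) (lexx _)).
apply: (le_trans le_x); rewrite -w_norm (cproj_pairing yP) //.
by rewrite (submx_trans wU) ?schmidt_row_base_sub.
Qed.

Lemma config_rproj (W : 'M[RR]_d) : \rank W = k ->
  exists2 x, x \in sperm_orbit config_vec &
    forall y, is_rproj W x y -> config_bound <= rnorm y.
Proof.
move=> rW; pose Wc := map_mx (real_complex RR) W.
have rWc : \rank Wc = k by rewrite mxrank_map.
have [w [wU /cnorm_test_vector w_norm [x xX le_x]]] :=
  config_test_vector rWc (schmidt_unitary Wc).
pose wr := \row_j Re (w 0 j).
have wrW : (wr <= W)%MS by rewrite Re_row_sub // (submx_trans wU) ?schmidt_row_base_sub.
have sk_gt0 : 0 < Num.sqrt (k%:R : RR) by rewrite sqrtr_gt0 ltr0n.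
exists x => // y yP; apply: (le_from_pairing sk_gt0 (sqrtr_ge0 _) _ (le_trans le_x _)).
  by rewrite -w_norm; exact: rnorm_Re_le.
rewrite (eq_bigr (fun j => x 0 j * wr 0 j)) => [|j _]; last by rewrite mxE.
exact: (rproj_pairing yP wrW).
Qed.

End Configuration.

Theorem theorem1p5 :
  exists c : RR, 0 < c /\
  forall k d : nat, leq 1 k -> leq k d ->
  exists X : seq 'rV[RR]_d,
    on_unit_sphere X /\ transitive_set X /\
    let b := c / Num.sqrt (Stdlib.Reals.Rpower.ln ((2 * d)%:R / k%:R)) in
    (forall W : 'M[RR]_d, \rank W = k ->
       exists2 x, x \in X & forall y, is_rproj W x y -> b <= rnorm y) /\
    (forall W : 'M[CC]_d, \rank W = k ->
       exists2 x, x \in X & forall y, is_cproj W (complexify x) y -> b <= cnorm y).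
Proof.
exists 32^-1; split=> [|k d k_gt0 le_kd]; first by rewrite invr_gt0.
exists (sperm_orbit (@config_vec k d)); split.
  exact/sperm_orbit_sphere/config_vec_unit.
split; first exact: sperm_orbit_transitive.
move=> b; have le_b : b <= config_bound k d.
  exact: inv_sqrt_bound (harm_trunc_gt0 k_gt0 le_kd) (harm_trunc_log k_gt0 le_kd).
split=> W rW.
- have [x xX le_x] := config_rproj k_gt0 le_kd rW.
  by exists x => // y /le_x; exact: le_trans.
- have [x xX le_x] := config_cproj k_gt0 le_kd rW.
  by exists x => // y /le_x; exact: le_trans.
Qed.
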